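(* $i(\vec P_3)\geq \frac{2}{5}$ and $i(\vec C_4)\geq \frac{2}{21}$.
   Context: An orgraph (oriented graph) is a directed graph with no loops, no multiple edges, and no pair of vertices joined by edges in both directions. For a finite orgraph $\Gamma$ and an integer $n$, let $max(\Gamma;n)$ be the maximum, over all orgraphs $G$ on $n$ vertices, of the number of vertex subsets $T\subseteq V(G)$ with $|T|=|V(\Gamma)|$ such that the subgraph of $G$ induced by $T$ is isomorphic to $\Gamma$ (each such set is counted once, regardless of automorphisms of $\Gamma$). The inducibility of $\Gamma$ is $i(\Gamma):=\limsup_{n\to\infty} max(\Gamma;n)/\binom{n}{|V(\Gamma)|}$. Here $\vec P_3$ is the orgraph on vertices $a,b,c$ with edges $a\to b$ and $b\to c$ only (directed path with 3 vertices), and $\vec C_4$ is the orgraph on vertices $v_1,v_2,v_3,v_4$ with edges $v_1\to v_2$, $v_2\to v_3$, $v_3\to v_4$, $v_4\to v_1$ only (directed 4-cycle). *)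

From HB Require Import structures.
From mathcomp Require Import all_boot all_order all_algebra.
From mathcomp Require Import all_classical all_reals all_analysis.
Set Implicit Arguments. Unset Strict Implicit. Unset Printing Implicit Defensive.
Import Order.TTheory GRing.Theory Num.Theory.

(* A (finite) digraph on vertex set 'I_n is encoded by its edge indicator
   G : {ffun 'I_n * 'I_n -> bool}, G (x, y) = true iff there is an edge x -> y. *)
Definition digraph (n : nat) := {ffun 'I_n * 'I_n -> bool}.

(* orgraph: no loops, no pair of opposite edges (no multiple edges is automatic) *)
Definition is_orgraph n (G : digraph n) : bool :=
  [forall x, ~~ G (x, x)] && [forall x, forall y, ~~ (G (x, y) && G (y, x))].

Definition induces_copy k n (Gam : digraph k) (G : digraph n) (T : {set 'I_n}) : bool :=
  [exists f : {ffun 'I_k -> 'I_n},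
     [&& injectiveb f, f @: setT == T &
         [forall a, forall b, Gam (a, b) == G (f a, f b)]]].

Definition ind_count k n (Gam : digraph k) (G : digraph n) : nat :=
  #|[set T : {set 'I_n} | induces_copy Gam G T]|.

Definition max_ind k (Gam : digraph k) (n : nat) : nat :=
  \max_(G : digraph n | is_orgraph G) ind_count Gam G.

Definition inducibility (R : realType) k (Gam : digraph k) : \bar R :=
  limn_esup (fun n : nat => (((max_ind Gam n)%:R / ('C(n, k))%:R : R))%:E).

Definition P3 : digraph 3 :=
  [ffun e : 'I_3 * 'I_3 => ((e.1 : nat), (e.2 : nat)) \in [:: (0, 1); (1, 2)]].

Definition C4 : digraph 4 :=
  [ffun e : 'I_4 * 'I_4 => ((e.1 : nat), (e.2 : nat)) \in [:: (0, 1); (1, 2); (2, 3); (3, 0)]].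

From mathcomp Require Import all_boot all_order all_algebra.
From mathcomp Require Import all_classical all_reals all_analysis.
From mathcomp Require Import zify.
Import Order.TTheory GRing.Theory Num.Theory.
Set Implicit Arguments. Unset Strict Implicit. Unset Printing Implicit Defensive.

(* Both bounds come from the iterated blow-up of the directed 4-cycle: G_0 is a
   single vertex and G_(m+1) replaces each vertex of C4 by a copy of G_m.  With
   N = 4^m the number of vertices of G_m, a copy of P3 (resp. C4) in G_(m+1)
   either lies inside one of the 4 parts, or takes one vertex from each of 3
   consecutive parts (resp. of all 4 parts), whence c_(m+1) >= 4 c_m + 4 N^3
   (resp. 4 c_m + N^4).  Solving, c_m >= (N^3 - N)/15 >= 2/5 C(N,3) and
   c_m >= (N^4 - N)/252 >= 2/21 C(N,4). *)

(* Read base 4, least significant digit first, a vertex lists the nested parts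
   containing it; the first digit where x and y differ decides the edge. *)
Fixpoint blowup_edge (m x y : nat) : bool :=
  if m is m'.+1 then
    if x %% 4 == y %% 4 then blowup_edge m' (x %/ 4) (y %/ 4)
    else y %% 4 == (x %% 4).+1 %% 4
  else false.

Lemma blowup_edge_irr m x : blowup_edge m x x = false.
Proof. by elim: m x => //= m IH x; rewrite eqxx IH. Qed.

Lemma blowup_edge_asym m x y : blowup_edge m x y && blowup_edge m y x = false.
Proof.
elim: m x y => //= m IH x y; rewrite eq_sym; case: eqP => [_|]; first exact: IH.
have := ltn_pmod x (isT : 0 < 4); have := ltn_pmod y (isT : 0 < 4).
by case: (x %% 4) => [|[|[|[|?]]]]; case: (y %% 4) => [|[|[|[|?]]]].
Qed.

Definition blowup m : digraph (4 ^ m) :=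
  [ffun e : 'I_(4 ^ m) * 'I_(4 ^ m) => blowup_edge m e.1 e.2].

Lemma blowup_orgraph m : is_orgraph (blowup m).
Proof.
apply/andP; split; apply/forallP => x; first by rewrite ffunE blowup_edge_irr.
by apply/forallP => y; rewrite !ffunE blowup_edge_asym.
Qed.

Lemma blowup_vertex_subproof m (x : 'I_(4 ^ m)) (c : 'I_4) : x * 4 + c < 4 ^ m.+1.
Proof. by have := ltn_ord x; have := ltn_ord c; rewrite expnS; lia. Qed.

(* The vertex x of the copy of G_m sitting in part c of G_(m+1). *)
Definition blowup_vertex m (x : 'I_(4 ^ m)) (c : 'I_4) : 'I_(4 ^ m.+1) :=
  Ordinal (blowup_vertex_subproof x c).

Lemma blowup_vertex_mod m x c : @blowup_vertex m x c %% 4 = c.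
Proof. by rewrite /= modnMDl modn_small. Qed.

Lemma blowup_vertex_div m x c : @blowup_vertex m x c %/ 4 = x.
Proof. by rewrite /= divnMDl // divn_small // addn0. Qed.

Lemma blowup_vertex_inj m x c y d :
  @blowup_vertex m x c = blowup_vertex y d -> x = y /\ c = d.
Proof.
move=> e; split; apply: val_inj.
  by move: (congr1 (fun v : 'I__ => v %/ 4) e); rewrite !blowup_vertex_div.
by move: (congr1 (fun v : 'I__ => v %% 4) e); rewrite !blowup_vertex_mod.
Qed.

Lemma blowup_vertex_inj_part m (c : 'I_4) :
  injective (fun x : 'I_(4 ^ m) => blowup_vertex x c).
Proof. by move=> x y /blowup_vertex_inj []. Qed.

Definition cyc4_edge (c d : 'I_4) : bool := d == c.+1 %% 4 :> nat.

Lemma cyc4_edge_irr c : cyc4_edge c c = false.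
Proof. by case: c => [[|[|[|[|]]]]]. Qed.

Lemma blowupS_edge m x c y d :
  blowup m.+1 (@blowup_vertex m x c, blowup_vertex y d) =
  if c == d then blowup m (x, y) else cyc4_edge c d.
Proof. by rewrite !ffunE /= !blowup_vertex_mod !blowup_vertex_div. Qed.

Lemma induces_copy_card k n (Gam : digraph k) (G : digraph n) T :
  induces_copy Gam G T -> #|T| = k.
Proof.
case/existsP => f /and3P [/injectiveP f_inj /eqP <- _].
rewrite card_imset // -[RHS]card_ord; apply: eq_card => i; exact: in_setT.
Qed.

Lemma induces_copy_imset k n n' (Gam : digraph k) (G : digraph n) (G' : digraph n')
    (h : 'I_n -> 'I_n') T :
  injective h -> (forall x y, G' (h x, h y) = G (x, y)) ->
  induces_copy Gam G T -> induces_copy Gam G' (h @: T).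
Proof.
move=> h_inj hG /existsP [f /and3P [/injectiveP f_inj /eqP <- /forallP fG]].
apply/existsP; exists [ffun a => h (f a)]; apply/and3P; split.
- by apply/injectiveP => a b; rewrite !ffunE => /h_inj /f_inj.
- by rewrite -imset_comp; apply/eqP/eq_imset => a; rewrite ffunE.
- apply/forallP => a; apply/forallP => b; rewrite !ffunE hG.
  exact: forallP (fG a) b.
Qed.

Lemma ind_count_le_max k n (Gam : digraph k) (G : digraph n) :
  is_orgraph G -> ind_count Gam G <= max_ind Gam n.
Proof. exact: (leq_bigmax_cond (F := ind_count Gam)). Qed.

Section BlowupCopies.

Variables (k m : nat) (Gam : digraph k).

Definition copies_within_parts : {set {set 'I_(4 ^ m.+1)}} :=
  [set (fun x => blowup_vertex x p.1) @: p.2 | p : 'I_4 * {set 'I_(4 ^ m)}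
     in finset.setX (setTfor 'I_4) [set T | induces_copy Gam (blowup m) T]].

Lemma induces_copy_within_parts T :
  T \in copies_within_parts -> induces_copy Gam (blowup m.+1) T.
Proof.
case/imsetP => [[c T0]] /setXP [_]; rewrite inE => T0_copy -> /=.
apply: induces_copy_imset T0_copy => [|x y]; first exact: blowup_vertex_inj_part.
by rewrite blowupS_edge eqxx.
Qed.

Lemma card_copies_within_parts :
  0 < k -> #|copies_within_parts| = 4 * ind_count Gam (blowup m).
Proof.
move=> k_gt0; rewrite card_in_imset ?cardsX ?cardsT ?card_ord //.
move=> [c T] [d T'] /setXP [_]; rewrite inE => /induces_copy_card T_k _ /= eqT.
have /card_gt0P [x xT] : 0 < #|T| by rewrite T_k.
have : blowup_vertex x c \in (fun x => blowup_vertex x d) @: T'.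
  by rewrite -eqT; apply: imset_f.
case/imsetP => y _ /blowup_vertex_inj [_ cd]; subst d.
by rewrite (imset_inj (@blowup_vertex_inj_part m c) eqT).
Qed.

(* A placement sends the vertices of Gam injectively to the parts of the
   blow-up, so that edges of Gam are exactly the C4-edges between parts. *)
Variables (Rt : finType) (place : Rt -> {ffun 'I_k -> 'I_4}).
Hypothesis place_inj : forall r, injective (place r).
Hypothesis place_edge : forall r i j, Gam (i, j) = cyc4_edge (place r i) (place r j).
Hypothesis place_image :
  forall r r', (forall i, exists j, place r' j = place r i) -> r = r'.

Definition transversal_copy (p : Rt * {ffun 'I_k -> 'I_(4 ^ m)}) :=
  (fun i => blowup_vertex (p.2 i) (place p.1 i)) @: setT.

Lemma induces_copy_transversal p : induces_copy Gam (blowup m.+1) (transversal_copy p).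
Proof.
case: p => r a; set f := [ffun i => blowup_vertex (a i) (place r i)].
have fE i : f i = blowup_vertex (a i) (place r i) by rewrite ffunE.
apply/existsP; exists f; apply/and3P; split.
- by apply/injectiveP => i j; rewrite !fE => /blowup_vertex_inj [_ /place_inj].
- by apply/eqP/eq_imset => i; rewrite fE.
- apply/forallP => i; apply/forallP => j; rewrite !fE blowupS_edge (place_edge r).
  have [<-|ne] := eqVneq i j.
    by rewrite eqxx ffunE /= blowup_edge_irr cyc4_edge_irr.
  by rewrite (inj_eq (@place_inj r)) (negbTE ne).
Qed.

Lemma transversal_copy_inj : injective transversal_copy.
Proof.
move=> [r a] [r' a'] /= eqT.
have meet i : exists j, blowup_vertex (a i) (place r i) = blowup_vertex (a' j) (place r' j).
  have : blowup_vertex (a i) (place r i) \in transversal_copy (r', a').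
    by rewrite -eqT; apply: imset_f; exact: in_setT.
  by case/imsetP => j _ e; exists j.
have er : r = r'.
  by apply: place_image => i; have [j /blowup_vertex_inj [_ ->]] := meet i; exists j.
subst r'; congr pair; apply/ffunP => i.
by have [j /blowup_vertex_inj [-> /place_inj ->]] := meet i.
Qed.

Lemma card_transversal_copies :
  #|[set transversal_copy p | p in setTfor (Rt * {ffun 'I_k -> 'I_(4 ^ m)})]|
  = #|Rt| * (4 ^ m) ^ k.
Proof.
rewrite card_imset ?cardsT ?card_prod ?card_ffun ?card_ord //.
exact: transversal_copy_inj.
Qed.

Hypothesis k_gt1 : 1 < k.

Lemma transversal_copy_notin_within_parts p :
  transversal_copy p \notin copies_within_parts.
Proof.
case: p => r a; apply/negP => /imsetP [[c T] _ /= eqT].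
have in_c i : place r i = c.
  have : blowup_vertex (a i) (place r i) \in (fun x => blowup_vertex x c) @: T.
    by rewrite -eqT; apply: imset_f; exact: in_setT.
  by case/imsetP => y _ /blowup_vertex_inj [].
have /place_inj/(congr1 val) : place r (Ordinal (ltnW k_gt1)) = place r (Ordinal k_gt1).
  by rewrite !in_c.
by [].
Qed.

Lemma ind_count_blowupS :
  4 * ind_count Gam (blowup m) + #|Rt| * (4 ^ m) ^ k <= ind_count Gam (blowup m.+1).
Proof.
rewrite -card_copies_within_parts ?(ltnW k_gt1) // -card_transversal_copies.
set W := copies_within_parts; set X := [set transversal_copy p | p in _].
have disj : [disjoint W & X].
  apply/pred0P => T /=; apply/andP => [[TW /imsetP [p _ eT]]].
  by move: TW; rewrite eT (negbTE (transversal_copy_notin_within_parts p)).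
apply: (@leq_trans #|W :|: X|).
  by rewrite leq_eqVlt eq_sym (leq_card_setU W X).2 disj.
apply: subset_leq_card; apply/fintype.subsetP => T; rewrite !inE.
case/orP => [/induces_copy_within_parts //|/imsetP [p _ ->]].
exact: induces_copy_transversal.
Qed.

End BlowupCopies.

Definition P3_placement (r : 'I_4) : {ffun 'I_3 -> 'I_4} :=
  [ffun i : 'I_3 => inZp (r + i)].

Lemma P3_placement_inj r : injective (P3_placement r).
Proof.
move=> i j /(congr1 val); rewrite !ffunE /= => e; apply: ord_inj.
by have := ltn_ord i; have := ltn_ord j; have := ltn_ord r; lia.
Qed.

Lemma P3_placement_edge r i j :
  P3 (i, j) = cyc4_edge (P3_placement r i) (P3_placement r j).
Proof.
rewrite !ffunE /cyc4_edge /=.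
by case: r i j => [[|[|[|[|r]]]] ?] [[|[|[|[|i]]]] ?] [[|[|[|[|j]]]] ?].
Qed.

(* The image of [P3_placement r] misses exactly the part [r + 3]. *)
Lemma P3_placement_image r r' :
  (forall i, exists j, P3_placement r' j = P3_placement r i) -> r = r'.
Proof.
move=> sub; apply: ord_inj; apply/eqP; apply: contraT => ne.
have i_lt3 : (r' + 7 - r) %% 4 < 3.
  by move: ne; have := ltn_ord r; have := ltn_ord r'; lia.
have [j /(congr1 val)] := sub (Ordinal i_lt3); rewrite !ffunE /=.
by have := ltn_ord r; have := ltn_ord r'; have := ltn_ord j; lia.
Qed.

Lemma P3_count_blowupS m :
  4 * ind_count P3 (blowup m) + 4 * (4 ^ m) ^ 3 <= ind_count P3 (blowup m.+1).
Proof.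
have := @ind_count_blowupS _ m P3 _ P3_placement; rewrite card_ord; apply => //.
- exact: P3_placement_inj.
- exact: P3_placement_edge.
- exact: P3_placement_image.
Qed.

Lemma C4_count_blowupS m :
  4 * ind_count C4 (blowup m) + (4 ^ m) ^ 4 <= ind_count C4 (blowup m.+1).
Proof.
have := @ind_count_blowupS _ m C4 unit (fun=> [ffun i : 'I_4 => i]).
rewrite card_unit mul1n; apply => //.
- by move=> _ i j; rewrite !ffunE.
- move=> _ i j; rewrite !ffunE /cyc4_edge /=.
  by case: i j => [[|[|[|[|i]]]] ?] [[|[|[|[|j]]]] ?].
- by move=> [] [].
Qed.

Lemma P3_count_blowup m : (4 ^ m) ^ 3 <= 15 * ind_count P3 (blowup m) + 4 ^ m.
Proof.
elim: m => [|m IH]; first exact: leq_addl.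
have := P3_count_blowupS m; move: (ind_count _ _) (ind_count _ _) IH => c' c IH.
rewrite [4 ^ m.+1]expnS; move: (4 ^ m) IH => N; nia.
Qed.

Lemma C4_count_blowup m : (4 ^ m) ^ 4 <= 252 * ind_count C4 (blowup m) + 4 ^ m.
Proof.
elim: m => [|m IH]; first exact: leq_addl.
have := C4_count_blowupS m; move: (ind_count _ _) (ind_count _ _) IH => c' c IH.
rewrite [4 ^ m.+1]expnS; move: (4 ^ m) IH => N; nia.
Qed.

Lemma bin3_bound N c : N ^ 3 <= 15 * c + N -> 2 * 'C(N, 3) <= 5 * c.
Proof.
have := bin_ffact N 3; rewrite !ffactnS ffactn0 (_ : 3`! = 6) //.
case: N => [|[|N]] //= e h; nia.
Qed.

Lemma bin4_bound N c : N ^ 4 <= 252 * c + N -> 2 * 'C(N, 4) <= 21 * c.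
Proof.
have := bin_ffact N 4; rewrite !ffactnS ffactn0 (_ : 4`! = 24) //.
case: N => [|[|[|N]]] //= e h; nia.
Qed.

Local Open Scope ring_scope.
Local Open Scope ereal_scope.

Lemma inducibility_ge (R : realType) k (Gam : digraph k) (p q : nat) :
  (0 < q)%N ->
  (forall n, exists2 N, (n <= N)%N & (p * 'C(N, k) <= q * max_ind Gam N)%N) ->
  (p%:R / q%:R : R)%:E <= inducibility R Gam.
Proof.
move=> q_gt0 hN; rewrite /inducibility limn_esup_lim.
apply: lime_ge; first exact: is_cvg_esups.
near=> n; have [N nN le_pq] := hN (n + k)%N.
have C_gt0 : (0 < 'C(N, k))%N by rewrite bin_gt0; apply: leq_trans nN; exact: leq_addl.
apply: (@le_trans _ _ ((max_ind Gam N)%:R / ('C(N, k))%:R)%:E).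
  rewrite lee_fin ler_pdivlMr ?ltr0n // mulrAC ler_pdivrMr ?ltr0n // -!natrM ler_nat.
  by rewrite [(max_ind _ _ * _)%N]mulnC.
by apply: ereal_sup_ubound; exists N => //=; apply: leq_trans nN; exact: leq_addr.
Unshelve. all: by end_near. Qed.

Theorem mainTheorem1 (R : realType) :
  ((2 / 5 : R)%:E <= inducibility R P3) /\ ((2 / 21 : R)%:E <= inducibility R C4).
Proof.
have le_pow4 n : (n <= 4 ^ n)%N by exact/ltnW/ltn_expl.
split; apply: inducibility_ge => // n; exists (4 ^ n)%N => //.
- apply: leq_trans (bin3_bound (P3_count_blowup n)) _.
  by rewrite leq_mul2l ind_count_le_max ?orbT // blowup_orgraph.
- apply: leq_trans (bin4_bound (C4_count_blowup n)) _.
  by rewrite leq_mul2l ind_count_le_max ?orbT // blowup_orgraph.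
Qed.
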